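(* Let $(X,\Gamma)$ be a $(\mu,\nu)$-path system space. For every $\delta\ge0$ and $\varepsilon\ge0$ there exists $\theta\ge0$ with the following property. Let $A,B\subseteq X$ be subsets with $\delta$-constricting maps $\pi_A\colon X\to A$ and $\pi_B\colon X\to B$, and let $Y\subseteq X$ be non-empty, such that $\operatorname{diam}_A(B)\le\varepsilon$, $\operatorname{diam}_B(A)\le\varepsilon$, $\operatorname{diam}_A(Y)\le\varepsilon$, $\operatorname{diam}_B(Y)\le\varepsilon$, $d(A,Y)\le\varepsilon$ and $d(B,Y)\le\varepsilon$. Then for every $x\in X$, $\min\{d_A(x,Y),d_B(x,Y)\}\le\theta$.
   Context: A path is a rectifiable continuous map $\alpha\colon[a,b]\to X$ parametrised by arc length; it is a $(\kappa,\lambda)$-quasi-geodesic if $d(\alpha(t),\alpha(t'))\le|t-t'|\le\kappa d(\alpha(t),\alpha(t'))+\lambda$. A $(\mu,\nu)$-path system space $(X,\Gamma)$ is a geodesic metric space $X$ with a collection $\Gamma$ of paths closed under subpaths, such that any two points are joined by an element of $\Gamma$ and every element is a $(\mu,\nu)$-quasi-geodesic. A map $\pi_A\colon X\to A$ onto a subset $A$ is $\delta$-constricting if (CS1) $d(x,\pi_A(x))\le\delta$ for $x\in A$, and (CS2) for all $x,y\in X$ and $\gamma\in\Gamma$ joining $x$ to $y$, if $d(\pi_A(x),\pi_A(y))>\delta$ then $\gamma$ meets $B_X(\pi_A(x),\delta)$ and $B_X(\pi_A(y),\delta)$. Notation: $d_A(x,y)=d(\pi_A(x),\pi_A(y))$,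 $\operatorname{diam}_A(Y)=\operatorname{diam}(\pi_A(Y))$, $d_A(x,Y)=d(\pi_A(x),\pi_A(Y))$, $d_A(Y,Z)=d(\pi_A(Y),\pi_A(Z))$, where $d$ between sets is the infimum of distances. *)

From Stdlib Require Import Reals List.
From Coquelicot Require Import Coquelicot.
Open Scope R_scope.

Definition is_metric {X : Type} (d : X -> X -> R) : Prop :=
  (forall x y, 0 <= d x y) /\
  (forall x y, d x y = 0 <-> x = y) /\
  (forall x y, d x y = d y x) /\
  (forall x y z, d x z <= d x y + d y z).

Definition is_geodesic {X : Type} (d : X -> X -> R) : Prop :=
  forall x y, exists g : R -> X,
    g 0 = x /\ g (d x y) = y /\
    forall s t, 0 <= s <= d x y -> 0 <= t <= d x y -> d (g s) (g t) = Rabs (s - t).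

(* A (candidate) path: a map defined on [p_a, p_b] (values outside are
   irrelevant). *)
Record path (X : Type) := mkPath { p_a : R; p_b : R; p_f : R -> X }.
Arguments mkPath {X} _ _ _.
Arguments p_a {X} _.
Arguments p_b {X} _.
Arguments p_f {X} _.

Fixpoint chain_sum {X : Type} (d : X -> X -> R) (f : R -> X) (t0 : R) (l : list R) : R :=
  match l with
  | nil => 0
  | t1 :: l' => d (f t0) (f t1) + chain_sum d f t1 l'
  end.

Fixpoint chain_incr (t0 : R) (l : list R) : Prop :=
  match l with
  | nil => True
  | t1 :: l' => t0 <= t1 /\ chain_incr t1 l'
  end.

Definition curve_length {X : Type} (d : X -> X -> R) (f : R -> X) (s t : R) : Rbar :=
  Lub_Rbar (fun v => exists l : list R,
    chain_incr s l /\ last l s = t /\ v = chain_sum d f s l).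

Definition is_path {X : Type} (d : X -> X -> R) (p : path X) : Prop :=
  p_a p <= p_b p /\
  (forall t, p_a p <= t <= p_b p -> forall eps, 0 < eps -> exists eta, 0 < eta /\
     forall t', p_a p <= t' <= p_b p -> Rabs (t' - t) < eta -> d (p_f p t) (p_f p t') < eps) /\
  is_finite (curve_length d (p_f p) (p_a p) (p_b p)) /\
  (forall s t, p_a p <= s -> s <= t -> t <= p_b p ->
     curve_length d (p_f p) s t = Finite (t - s)).

Definition quasi_geodesic {X : Type} (d : X -> X -> R) (kappa lambda : R) (p : path X) : Prop :=
  forall t t', p_a p <= t <= p_b p -> p_a p <= t' <= p_b p ->
    d (p_f p t) (p_f p t') <= Rabs (t - t') /\
    Rabs (t - t') <= kappa * d (p_f p t) (p_f p t') + lambda.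

Definition joins {X : Type} (p : path X) (x y : X) : Prop :=
  p_f p (p_a p) = x /\ p_f p (p_b p) = y.

Definition path_system_space {X : Type} (d : X -> X -> R) (mu nu : R)
    (Gamma : path X -> Prop) : Prop :=
  is_metric d /\ is_geodesic d /\
  (forall p, Gamma p -> is_path d p) /\
  (forall p, Gamma p -> forall s t, p_a p <= s -> s <= t -> t <= p_b p ->
     Gamma (mkPath s t (p_f p))) /\
  (forall x y, exists p, Gamma p /\ joins p x y) /\
  (forall p, Gamma p -> quasi_geodesic d mu nu p).

Definition ball_X {X : Type} (d : X -> X -> R) (c : X) (r : R) : X -> Prop :=
  fun z => d c z < r.

Definition meets {X : Type} (p : path X) (S : X -> Prop) : Prop :=
  exists t, p_a p <= t <= p_b p /\ S (p_f p t).

Definition constricting {X : Type} (d : X -> X -> R) (Gamma : path X -> Prop)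
    (delta : R) (A : X -> Prop) (pi : X -> X) : Prop :=
  (forall x, A (pi x)) /\
  (forall x, A x -> d x (pi x) <= delta) /\
  (forall x y p, Gamma p -> joins p x y -> d (pi x) (pi y) > delta ->
     meets p (ball_X d (pi x) delta) /\ meets p (ball_X d (pi y) delta)).

Definition img {X : Type} (f : X -> X) (S : X -> Prop) : X -> Prop :=
  fun z => exists y, S y /\ z = f y.

(* Diameter (sup of distances; -oo for the empty set, never relevant here). *)
Definition diam {X : Type} (d : X -> X -> R) (S : X -> Prop) : Rbar :=
  Lub_Rbar (fun v => exists y z, S y /\ S z /\ v = d y z).

Definition setdist {X : Type} (d : X -> X -> R) (S T : X -> Prop) : Rbar :=
  Glb_Rbar (fun v => exists y z, S y /\ T z /\ v = d y z).

Definition singleton {X : Type} (x : X) : X -> Prop := fun z => z = x.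

(* diam_A(Y) = diam (pi_A(Y)) *)
Definition diam_proj {X : Type} (d : X -> X -> R) (pi : X -> X) (Y : X -> Prop) : Rbar :=
  diam d (img pi Y).

(* d_A(x, Y) = d(pi_A(x), pi_A(Y)) *)
Definition dproj_pt_set {X : Type} (d : X -> X -> R) (pi : X -> X) (x : X) (Y : X -> Prop) : Rbar :=
  setdist d (singleton (pi x)) (img pi Y).

(* A constricting map is coarsely Lipschitz, and it sends every point of a
   Gamma-path from x to pi_B(x) close to pi_B(x).  Now take the Gamma-path
   from x to pi_B(x).  If pi_A barely separates its endpoints, then
   pi_A(x) is near pi_A(pi_B(x)), which lies within eps of pi_A(B) and hence
   near pi_A(Y), since B and Y are eps-close.  Otherwise the path passes
   delta-close to pi_A(x), so pi_B(pi_A(x)) is near pi_B(x), and the same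
   argument with A and B exchanged bounds d_B(x, Y). *)
From Stdlib Require Import Reals Lra Classical.
From Coquelicot Require Import Coquelicot.
Open Scope R_scope.

Lemma setdist_le_witness {X : Type} (d : X -> X -> R) (S T : X -> Prop) (e r : R) :
  e < r -> Rbar_le (setdist d S T) (Finite e) ->
  exists y z, S y /\ T z /\ d y z <= r.
Proof.
  intros Her Hle; apply NNPP; intros Hno.
  assert (Hr : Rbar_le (Finite r) (setdist d S T)).
  { apply (proj2 (Glb_Rbar_correct _)); intros v (y & z & Hy & Hz & ->); simpl.
    destruct (Rle_dec (d y z) r) as [Hyz | Hyz]; [| lra].
    exfalso; apply Hno; exists y, z; auto. }
  pose proof (Rbar_le_trans _ _ _ Hr Hle); simpl in *; lra.
Qed.

Lemma dist_proj_le_diam_proj {X : Type} (d : X -> X -> R) (pi : X -> X)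
    (S : X -> Prop) (e : R) (y z : X) :
  Rbar_le (diam_proj d pi S) (Finite e) -> S y -> S z -> d (pi y) (pi z) <= e.
Proof.
  intros Hdiam Hy Hz.
  assert (Hyz : Rbar_le (Finite (d (pi y) (pi z))) (diam_proj d pi S)).
  { apply (proj1 (Lub_Rbar_correct _)).
    exists (pi y), (pi z); split; [exists y | split; [exists z |]]; auto. }
  exact (Rbar_le_trans _ _ _ Hyz Hdiam).
Qed.

Lemma dproj_pt_set_le {X : Type} (d : X -> X -> R) (pi : X -> X)
    (Y : X -> Prop) (x y : X) (theta : R) :
  Y y -> d (pi x) (pi y) <= theta -> Rbar_le (dproj_pt_set d pi x Y) (Finite theta).
Proof.
  intros Hy Hle.
  apply Rbar_le_trans with (Finite (d (pi x) (pi y))); [| exact Hle].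
  apply (proj1 (Glb_Rbar_correct _)).
  exists (pi x), (pi y); repeat split; exists y; auto.
Qed.

Definition qg_bound (mu nu r : R) : R := Rabs mu * r + Rabs nu.

Lemma qg_bound_ge0 (mu nu r : R) : 0 <= r -> 0 <= qg_bound mu nu r.
Proof.
  intros Hr; unfold qg_bound.
  pose proof (Rabs_pos mu); pose proof (Rabs_pos nu); nra.
Qed.

Section PathSystem.

Context {X : Type} {d : X -> X -> R} {mu nu : R} {Gamma : path X -> Prop}.
Hypothesis HX : path_system_space d mu nu Gamma.

Local Notation qg := (qg_bound mu nu).

Lemma d_ge0 (x y : X) : 0 <= d x y.
Proof. apply HX. Qed.

Lemma d_sym (x y : X) : d x y = d y x.
Proof. apply HX. Qed.

Lemma d_triangle (x y z : X) : d x z <= d x y + d y z.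
Proof. apply HX. Qed.

(* Quasi-geodesicity bounds |t - t'| <= |s - s'| <= mu d(p s, p s') + nu. *)
Lemma Gamma_path_dist_le (p : path X) (s t t' s' r : R) :
  Gamma p -> p_a p <= s -> s <= t <= s' -> s <= t' <= s' -> s' <= p_b p ->
  d (p_f p s) (p_f p s') <= r -> d (p_f p t) (p_f p t') <= qg r.
Proof.
  intros Hp Has Ht Ht' Hsb Hr.
  destruct HX as (_ & _ & _ & _ & _ & Hqg).
  destruct (Hqg p Hp t t') as [Htt' _]; [lra | lra |].
  destruct (Hqg p Hp s s') as [_ Hss']; [lra | lra |].
  assert (Habs : Rabs (t - t') <= Rabs (s - s')).
  { rewrite (Rabs_left1 (s - s')) by lra.
    unfold Rabs; destruct (Rcase_abs (t - t')); lra. }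
  pose proof (d_ge0 (p_f p s) (p_f p s')).
  pose proof (Rle_abs mu); pose proof (Rle_abs nu); pose proof (Rabs_pos mu).
  unfold qg_bound; nra.
Qed.

Variables (delta : R) (A : X -> Prop) (pi : X -> X).
Hypotheses (Hdelta : 0 <= delta) (Hpi : constricting d Gamma delta A pi).

Lemma constricting_proj_dist_le (x y : X) (r : R) :
  d x y <= r -> d (pi x) (pi y) <= 2 * delta + qg r.
Proof.
  intros Hr.
  destruct (Rle_dec (d (pi x) (pi y)) delta) as [Hle | Hgt].
  - pose proof (d_ge0 x y); pose proof (qg_bound_ge0 mu nu r); lra.
  - destruct HX as (_ & _ & _ & _ & Hjoin & _).
    destruct (Hjoin x y) as (p & Hp & Hxp & Hyp).
    destruct Hpi as (_ & _ & Hcs).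
    destruct (Hcs x y p Hp (conj Hxp Hyp)) as [(t & Ht & Hxt) (t' & Ht' & Hyt')];
      [lra |].
    unfold ball_X in Hxt, Hyt'.
    assert (Htt' : d (p_f p t) (p_f p t') <= qg r).
    { apply (Gamma_path_dist_le p (p_a p) t t' (p_b p)); try lra; auto.
      rewrite Hxp, Hyp; exact Hr. }
    pose proof (d_triangle (pi x) (p_f p t) (pi y)).
    pose proof (d_triangle (p_f p t) (p_f p t') (pi y)).
    rewrite (d_sym (p_f p t') (pi y)) in *; lra.
Qed.

Lemma constricting_proj_on_path_to_proj (x : X) (p : path X) (u : R) :
  Gamma p -> joins p x (pi x) -> p_a p <= u <= p_b p ->
  d (pi (p_f p u)) (pi x) <= 3 * delta + qg (qg delta).
Proof.
  intros Hp [Hxp Hpix] Hu.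
  pose proof (qg_bound_ge0 mu nu (qg delta) (qg_bound_ge0 mu nu delta Hdelta)).
  destruct (Rle_dec (d (pi x) (pi (p_f p u))) delta) as [Hle | Hgt].
  { rewrite d_sym; lra. }
  destruct HX as (_ & _ & _ & Hsub & _ & _).
  destruct Hpi as (HinA & Hnear & Hcs).
  assert (Hq : Gamma (mkPath (p_a p) u (p_f p))) by (apply Hsub; auto; lra).
  destruct (Hcs x (p_f p u) _ Hq (conj Hxp eq_refl)) as [(t & Ht & Hxt) _]; [lra |].
  unfold ball_X in Hxt; simpl in Ht, Hxt.
  (* the subpath ending at p u already came delta-close to pi x, so the rest of
     p, which ends at pi x, is short *)
  assert (Hupix : d (p_f p u) (pi x) <= qg delta).
  { rewrite <- Hpix.
    apply (Gamma_path_dist_le p t u (p_b p) (p_b p)); try lra; auto.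
    rewrite Hpix, d_sym; lra. }
  pose proof (constricting_proj_dist_le _ _ _ Hupix).
  pose proof (Hnear (pi x) (HinA x)).
  pose proof (d_triangle (pi (p_f p u)) (pi (pi x)) (pi x)).
  rewrite (d_sym (pi (pi x)) (pi x)) in *; lra.
Qed.

End PathSystem.

Section TwoConstrictingMaps.

Context {X : Type} {d : X -> X -> R} {mu nu : R} {Gamma : path X -> Prop}.
Hypothesis HX : path_system_space d mu nu Gamma.

Local Notation qg := (qg_bound mu nu).

Variables (delta : R) (A B : X -> Prop) (piA piB : X -> X).
Hypotheses (Hdelta : 0 <= delta)
  (HA : constricting d Gamma delta A piA) (HB : constricting d Gamma delta B piB).

Lemma proj_proj_close_of_proj_far (x : X) :
  delta < d (piA x) (piA (piB x)) ->
  d (piB x) (piB (piA x)) <= 5 * delta + qg (qg delta) + qg delta.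
Proof.
  intros Hfar.
  destruct HX as (_ & _ & _ & _ & Hjoin & _).
  destruct (Hjoin x (piB x)) as (p & Hp & Hjn).
  destruct HA as (_ & _ & Hcs).
  destruct (Hcs x (piB x) p Hp Hjn) as [(t & Ht & Hxt) _]; [lra |].
  unfold ball_X in Hxt.
  pose proof (constricting_proj_on_path_to_proj HX delta B piB Hdelta HB x p t Hp Hjn Ht).
  assert (Htx : d (p_f p t) (piA x) <= delta) by (rewrite (d_sym HX); lra).
  pose proof (constricting_proj_dist_le HX delta B piB Hdelta HB _ _ _ Htx).
  pose proof (d_triangle HX (piB x) (piB (p_f p t)) (piB (piA x))).
  rewrite (d_sym HX (piB x) (piB (p_f p t))) in *; lra.
Qed.

Variables (eps r : R) (a ya b yb : X).
Hypotheses (HAB : Rbar_le (diam_proj d piA B) (Finite eps))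
  (HBA : Rbar_le (diam_proj d piB A) (Finite eps))
  (Ha : A a) (Hb : B b)
  (Haya : d a ya <= r) (Hbyb : d b yb <= r).

Lemma proj_dist_le_either (x : X) :
  let theta := 7 * delta + qg (qg delta) + qg delta + eps + qg r in
  d (piA x) (piA yb) <= theta \/ d (piB x) (piB ya) <= theta.
Proof.
  intros theta.
  pose proof (qg_bound_ge0 mu nu delta Hdelta).
  pose proof (qg_bound_ge0 mu nu (qg delta) ltac:(assumption)).
  destruct HA as (HinA & _ & _); destruct HB as (HinB & _ & _).
  destruct (Rle_dec (d (piA x) (piA (piB x))) delta) as [Hclose | Hfar].
  - left.
    pose proof (dist_proj_le_diam_proj d piA B eps (piB x) b HAB (HinB x) Hb).
    pose proof (constricting_proj_dist_le HX delta A piA Hdelta HA _ _ _ Hbyb).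
    pose proof (d_triangle HX (piA x) (piA (piB x)) (piA yb)).
    pose proof (d_triangle HX (piA (piB x)) (piA b) (piA yb)).
    unfold theta; lra.
  - right.
    pose proof (proj_proj_close_of_proj_far x ltac:(lra)).
    pose proof (dist_proj_le_diam_proj d piB A eps (piA x) a HBA (HinA x) Ha).
    pose proof (constricting_proj_dist_le HX delta B piB Hdelta HB _ _ _ Haya).
    pose proof (d_triangle HX (piB x) (piB (piA x)) (piB ya)).
    pose proof (d_triangle HX (piB (piA x)) (piB a) (piB ya)).
    unfold theta; lra.
Qed.

End TwoConstrictingMaps.

(* Only one point of Y matters. *)
Theorem mainTheorem8 (X : Type) (d : X -> X -> R) (mu nu : R)
    (Gamma : path X -> Prop) :
  path_system_space d mu nu Gamma ->
  forall delta eps : R, 0 <= delta -> 0 <= eps ->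
  exists theta : R, 0 <= theta /\
    forall (A B : X -> Prop) (piA piB : X -> X) (Y : X -> Prop),
      constricting d Gamma delta A piA ->
      constricting d Gamma delta B piB ->
      (exists y, Y y) ->
      Rbar_le (diam_proj d piA B) (Finite eps) ->
      Rbar_le (diam_proj d piB A) (Finite eps) ->
      Rbar_le (diam_proj d piA Y) (Finite eps) ->
      Rbar_le (diam_proj d piB Y) (Finite eps) ->
      Rbar_le (setdist d A Y) (Finite eps) ->
      Rbar_le (setdist d B Y) (Finite eps) ->
      forall x : X,
        Rbar_le (Rbar_min (dproj_pt_set d piA x Y) (dproj_pt_set d piB x Y)) (Finite theta).
Proof.
  intros HX delta eps Hdelta Heps.
  exists (7 * delta + qg_bound mu nu (qg_bound mu nu delta) + qg_bound mu nu delta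
          + eps + qg_bound mu nu (eps + 1)).
  split.
  { pose proof (qg_bound_ge0 mu nu delta Hdelta).
    pose proof (qg_bound_ge0 mu nu (qg_bound mu nu delta) ltac:(assumption)).
    pose proof (qg_bound_ge0 mu nu (eps + 1) ltac:(lra)); lra. }
  intros A B piA piB Y HA HB _ HAB HBA _ _ HAY HBY x.
  destruct (setdist_le_witness d A Y eps (eps + 1) ltac:(lra) HAY)
    as (a & ya & Ha & Hya & Haya).
  destruct (setdist_le_witness d B Y eps (eps + 1) ltac:(lra) HBY)
    as (b & yb & Hb & Hyb & Hbyb).
  destruct (proj_dist_le_either HX delta A B piA piB Hdelta HA HB eps (eps + 1)
              a ya b yb HAB HBA Ha Hb Haya Hbyb x) as [HdA | HdB].
  - eapply Rbar_le_trans; [apply Rbar_min_l | exact (dproj_pt_set_le d piA Y x yb _ Hyb HdA)].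
  - eapply Rbar_le_trans; [apply Rbar_min_r | exact (dproj_pt_set_le d piB Y x ya _ Hya HdB)].
Qed.
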